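(* Let $k\geq 4$ be fixed. Then, as $n\to\infty$, \[ \frac{2n}{k}+O(1) \;\ge\; \mathrm{wsat}_k(n,B_k) \;\ge\; \frac{2n}{k+O(1)}, \] where the $O(1)$ terms denote quantities bounded in absolute value by constants independent of $n$. That is, there are constants $C_1, C_2$ (independent of $n$) such that for all sufficiently large $n$, $\frac{2n}{k+C_2}\le \mathrm{wsat}_k(n,B_k)\le \frac{2n}{k}+C_1$.
   Context: A $k$-uniform hypergraph $H$ has a vertex set $V(H)$ and a set $E(H)$ of $k$-element subsets of $V(H)$ (hyperedges). The bow tie $B_k$ is the $k$-uniform hypergraph with $2k-1$ vertices and two hyperedges sharing exactly one vertex; thus a $k$-uniform hypergraph contains a copy of $B_k$ iff two of its hyperedges intersect in exactly one vertex. A $k$-uniform hypergraph $H$ on $n$ vertices is $B_k$-semi-saturated if for every $k$-subset $e\subseteq V(H)$ with $e\notin E(H)$, adding $e$ creates a new copy of $B_k$ (containing $e$), i.e. there is a hyperedge $f\in E(H)$ with $|e\cap f|=1$; $H$ itself need not be $B_k$-free. The semi-saturation number $\mathrm{wsat}_k(n,B_k)$ is the minimum number of hyperedges of an $n$-vertex $k$-uniform $B_k$-semi-saturated hypergraph. *)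

From mathcomp Require Import all_boot all_order all_algebra.
Set Implicit Arguments. Unset Strict Implicit. Unset Printing Implicit Defensive.

Definition kuniform (k n : nat) (E : {set {set 'I_n}}) : bool :=
  [forall f in E, #|f| == k].

(* B_k-semi-saturated: every k-subset e not in E meets some edge f in exactly
   one vertex (so adding e creates a new bow tie containing e). *)
Definition Bk_semisat (k n : nat) (E : {set {set 'I_n}}) : bool :=
  [forall e : {set 'I_n}, ((#|e| == k) && (e \notin E)) ==>
     [exists f in E, #|e :&: f| == 1]].

Definition complete_kgraph (k n : nat) : {set {set 'I_n}} :=
  [set e : {set 'I_n} | #|e| == k].

(* The default value is the size of the
   complete k-graph, which is itself a candidate, so this is the true minimum. *)
Definition wsat_Bk (k n : nat) : nat :=
  \big[minn/#|complete_kgraph k n|]_(E : {set {set 'I_n}} |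
        kuniform k E && Bk_semisat k E) #|E|.

From mathcomp Require Import all_boot all_order all_algebra zify.
Set Implicit Arguments. Unset Strict Implicit. Unset Printing Implicit Defensive.
Import Order.TTheory GRing.Theory Num.Theory.

(* Lower bound: the edges of a k-uniform B_k-semi-saturated hypergraph E cover
   at most k|E| vertices, and k uncovered vertices would form a non-edge meeting
   no edge in exactly one vertex, so n < k(|E| + 1).

   Upper bound: let G be a loopless k-regular multigraph in which every nonempty
   set of at most k edges has a vertex of degree one.  The stars of G form a
   k-uniform hypergraph on E(G), with |V(G)| = 2|E(G)|/k edges, in which every
   nonempty set of at most k points meets some edge in exactly one point; hence
   so does a disjoint union of copies of it together with a complete k-graph on
   the O(1) leftover vertices, giving wsat_k(n, B_k) <= 2n/k + O(1).  Such G are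
   obtained from k parallel edges by iterating a 2^|E|-fold cover: the lift
   (y, X) of an edge y joins (src y, X) to (dst y, X xor {y}).  If every edge set
   of size <= g of G has a leaf, every edge set of size <= 2g + 1 of the cover
   has two leaves. *)

(** * Hypergraphs meeting every small set in exactly one point *)

Lemma exists_subset_card (T : finType) (A : {set T}) m :
  m <= #|A| -> exists2 B : {set T}, B \subset A & #|B| = m.
Proof.
move=> le_mA; have : 0 < #|[set B : {set T} | B \subset A & #|B| == m]|.
  by rewrite cards_draws bin_gt0.
by case/card_gt0P => B; rewrite inE => /andP[BA /eqP]; exists B.
Qed.

Lemma card_gt1_neq (T : finType) (A : {set T}) p :
  1 < #|A| -> exists2 x, x \in A & x != p.
Proof.
rewrite (cardsD1 p) => A_gt1; have : A :\ p != set0.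
  by rewrite -card_gt0; move: A_gt1; case: (p \in A) => /=; lia.
by case/set0Pn => x; rewrite !inE => /andP[x_p Ax]; exists x.
Qed.

Lemma card_preimset_le (T T' : finType) (h : T -> T') (S : {set T'}) :
  injective h -> #|h @^-1: S| <= #|S|.
Proof.
move=> h_inj; rewrite -(card_imset _ h_inj); apply: subset_leq_card.
by apply/subsetP => _ /imsetP[x + ->]; rewrite inE.
Qed.

Lemma double_card_imset_le (A B : finType) (f : A -> B) (S : {set A}) :
  (forall y, y \in f @: S -> 1 < #|[set x in S | f x == y]|) ->
  2 * #|f @: S| <= #|S|.
Proof.
move=> fibre_gt1; rewrite -[#|S|]sum1_card (partition_big_imset f) /=.
rewrite mulnC -sum_nat_const; apply: leq_sum => y /fibre_gt1.
by rewrite sum1dep_card.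
Qed.

Definition uniform (T : finType) (k : nat) (F : {set {set T}}) : Prop :=
  forall f, f \in F -> #|f| = k.

Definition hit_once (T : finType) (F : {set {set T}}) (S : {set T}) : bool :=
  [exists f in F, #|S :&: f| == 1].

Definition hits_once_upto (T : finType) (k : nat) (F : {set {set T}}) : Prop :=
  forall S : {set T}, 0 < #|S| <= k -> hit_once F S.

Definition himage (T T' : finType) (h : T -> T') (F : {set {set T}}) :
    {set {set T'}} :=
  [set h @: (f : {set T}) | f in F].

Lemma uniform_himage (T T' : finType) (h : T -> T') k (F : {set {set T}}) :
  injective h -> uniform k F -> uniform k (himage h F).
Proof. by move=> h_inj unifF _ /imsetP[f Ff ->]; rewrite card_imset // unifF. Qed.

Lemma hit_once_himage (T T' : finType) (h : T -> T') (F : {set {set T}}) (S : {set T'}) :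
  injective h -> hit_once F (h @^-1: S) -> hit_once (himage h F) S.
Proof.
move=> h_inj /exists_inP[f Ff hitf]; apply/exists_inP; exists (h @: f).
  exact: imset_f.
suff -> : S :&: h @: f = h @: (h @^-1: S :&: f) by rewrite card_imset.
apply/setP => y; rewrite inE; apply/andP/imsetP => [[Sy /imsetP[x fx def_y]]|].
  by exists x; rewrite // !inE -def_y Sy.
by case=> x; rewrite !inE => /andP[Shx fx] ->; rewrite Shx imset_f.
Qed.

Lemma hit_onceS (T : finType) (F G : {set {set T}}) (S : {set T}) :
  F \subset G -> hit_once F S -> hit_once G S.
Proof.
move=> /subsetP FG /exists_inP[f Ff hitf]; apply/exists_inP.
by exists f; first exact: FG.
Qed.

Lemma hit_once_embed (T T' : finType) (h : T -> T') k (F : {set {set T}})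
    (G : {set {set T'}}) (S : {set T'}) :
  injective h -> hits_once_upto k F -> himage h F \subset G ->
  0 < #|h @^-1: S| -> #|S| <= k -> hit_once G S.
Proof.
move=> h_inj hitsF FG S0 Sk; apply: hit_onceS FG _; apply: hit_once_himage => //.
by apply: hitsF; rewrite S0 (leq_trans (card_preimset_le _ h_inj)).
Qed.

Definition copies (T : finType) (a : nat) (F : {set {set T}}) :
    {set {set 'I_a * T}} :=
  [set pair p.1 @: p.2 | p : 'I_a * {set T} in setX setT F].

Lemma card_copies (T : finType) a (F : {set {set T}}) : #|copies a F| <= a * #|F|.
Proof. by rewrite (leq_trans (leq_imset_card _ _)) // cardsX cardsT card_ord. Qed.

Lemma uniform_copies (T : finType) a k (F : {set {set T}}) :
  uniform k F -> uniform k (copies a F).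
Proof.
move=> unifF _ /imsetP[[i f] /setXP[_ Ff] ->].
by rewrite card_imset ?unifF //; move=> x y [].
Qed.

Lemma hits_once_copies (T : finType) a k (F : {set {set T}}) :
  hits_once_upto k F -> hits_once_upto k (copies a F).
Proof.
move=> hitsF S /andP[/card_gt0P[[i x] Sx] Sk].
apply: (@hit_once_embed _ _ (pair i) k F) => //.
- by move=> y z [].
- by apply/subsetP => _ /imsetP[f Ff ->]; apply/imsetP; exists (i, f); rewrite ?inE.
- by apply/card_gt0P; exists x; rewrite inE.
Qed.

Definition hsum (T1 T2 : finType) (F1 : {set {set T1}}) (F2 : {set {set T2}}) :
    {set {set T1 + T2}} :=
  himage inl F1 :|: himage inr F2.

Lemma card_hsum (T1 T2 : finType) (F1 : {set {set T1}}) (F2 : {set {set T2}}) :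
  #|hsum F1 F2| <= #|F1| + #|F2|.
Proof. by rewrite (leq_trans (leq_card_setU _ _)) // leq_add ?leq_imset_card. Qed.

Lemma uniform_hsum (T1 T2 : finType) k (F1 : {set {set T1}}) (F2 : {set {set T2}}) :
  uniform k F1 -> uniform k F2 -> uniform k (hsum F1 F2).
Proof.
move=> unif1 unif2 f /setUP[].
  by apply: (uniform_himage _ unif1) => x y [].
by apply: (uniform_himage _ unif2) => x y [].
Qed.

Lemma hits_once_hsum (T1 T2 : finType) k (F1 : {set {set T1}}) (F2 : {set {set T2}}) :
  hits_once_upto k F1 -> hits_once_upto k F2 -> hits_once_upto k (hsum F1 F2).
Proof.
move=> hits1 hits2 S /andP[/card_gt0P[[x|x] Sx] Sk].
  apply: (@hit_once_embed _ _ inl k F1) => //; first by move=> y z [].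
    exact: subsetUl.
  by apply/card_gt0P; exists x; rewrite inE.
apply: (@hit_once_embed _ _ inr k F2) => //; first by move=> y z [].
  exact: subsetUr.
by apply/card_gt0P; exists x; rewrite inE.
Qed.

Lemma uniform_complete_kgraph k m : uniform k (complete_kgraph k m).
Proof. by move=> f; rewrite inE => /eqP. Qed.

Lemma hits_once_complete k m :
  2 * k <= m.+1 -> hits_once_upto k (complete_kgraph k m).
Proof.
move=> le_2k_m S /andP[S_gt0 Sk]; case/card_gt0P: (S_gt0) => x Sx.
have : k.-1 <= #|~: S| by move: (cardsC S); rewrite card_ord; lia.
case/exists_subset_card => R /subsetP R_S' card_R.
have xNR : x \notin R by apply/negP => /R_S'; rewrite inE Sx.
apply/exists_inP; exists (x |: R).
  by rewrite inE cardsU1 xNR card_R; lia.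
apply/cards1P; exists x; apply/setP => z; rewrite !inE.
case: (eqVneq z x) => [-> | _] /=; first by rewrite Sx.
by apply/negbTE/andP => -[Sz /R_S']; rewrite inE Sz.
Qed.

(** * Multigraphs whose small edge sets have leaves *)

Section Multigraph.

Variables (V W : finType) (src dst : W -> V).

Definition incident (y : W) (v : V) : bool := (src y == v) || (dst y == v).

Definition star (v : V) : {set W} := [set y | incident y v].

Definition leaves (S : {set W}) : {set V} := [set v | #|S :&: star v| == 1].

Definition loopless : Prop := forall y, src y != dst y.

Definition regular (k : nat) : Prop := forall v, #|star v| = k.

Definition has_leaf_upto (g : nat) : Prop :=
  forall S : {set W}, 0 < #|S| <= g -> leaves S != set0.

Definition has_two_leaves_upto (g : nat) : Prop :=
  forall S : {set W}, 0 < #|S| <= g -> 1 < #|leaves S|.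

Definition stars : {set {set W}} := [set star v | v : V].

Lemma has_two_leaves_has_leaf g g' :
  g' <= g -> has_two_leaves_upto g -> has_leaf_upto g'.
Proof.
move=> le_g'g two S /andP[S_gt0 Sg']; rewrite -card_gt0 ltnW // two //.
by rewrite S_gt0 (leq_trans Sg').
Qed.

Lemma leaves_superset (T S : {set W}) v :
  T \subset S -> S :&: star v \subset T -> (v \in leaves S) = (v \in leaves T).
Proof.
move=> TS ST; rewrite !inE; suff -> : S :&: star v = T :&: star v by [].
by apply/eqP; rewrite eqEsubset subsetI ST subsetIr setSI.
Qed.

Lemma handshake k : loopless -> regular k -> k * #|V| = 2 * #|W|.
Proof.
move=> no_loop reg.
have ends_card y : \sum_(v | incident y v) 1 = 2.
  rewrite sum1dep_card -[RHS]/((true : nat).+1) -(no_loop y) -cards2.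
  by apply: eq_card => v; rewrite !inE /incident ![v == _]eq_sym.
have star_card v : \sum_(y | incident y v) 1 = k by rewrite sum1dep_card -(reg v).
have -> : k * #|V| = \sum_v \sum_(y | incident y v) 1.
  by rewrite (eq_bigr _ (fun v _ => star_card v)) sum_nat_const mulnC.
have -> : 2 * #|W| = \sum_y \sum_(v | incident y v) 1.
  by rewrite (eq_bigr _ (fun y _ => ends_card y)) sum_nat_const mulnC.
exact: (exchange_big_dep xpredT).
Qed.

Lemma uniform_stars k : regular k -> uniform k stars.
Proof. by move=> reg _ /imsetP[v _ ->]. Qed.

Lemma hits_once_stars g : has_leaf_upto g -> hits_once_upto g stars.
Proof.
move=> has_leaf S /has_leaf /set0Pn[v]; rewrite inE => leaf_v.
by apply/exists_inP; exists (star v); first exact: imset_f.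
Qed.

End Multigraph.

Section Lift.

Variables (V W : finType) (src dst : W -> V).
Hypothesis no_loop : loopless src dst.

Definition flip (X : {set W}) (y : W) : {set W} := [set z | (z \in X) (+) (z == y)].

Lemma flipK y : involutive (flip^~ y).
Proof. by move=> X; apply/setP => z; rewrite !inE addbK. Qed.

Definition lift_src (c : W * {set W}) : V * {set W} := (src c.1, c.2).
Definition lift_dst (c : W * {set W}) : V * {set W} := (dst c.1, flip c.2 c.1).

Local Notation lincident := (incident lift_src lift_dst).
Local Notation lstar := (star lift_src lift_dst).
Local Notation lleaves := (leaves lift_src lift_dst).

Lemma lift_loopless : loopless lift_src lift_dst.
Proof. by move=> c; rewrite xpair_eqE negb_and no_loop. Qed.

Lemma lift_incident_proj c p : lincident c p -> incident src dst c.1 p.1.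
Proof. by case/orP => /eqP <-; rewrite /incident eqxx ?orbT. Qed.

Lemma lift_incident_bit y c p :
  c.1 != y -> lincident c p -> (y \in p.2) = (y \in c.2).
Proof. by move=> cy; case/orP => /eqP <- //=; rewrite inE eq_sym (negbTE cy) addbF. Qed.

Lemma lift_incident_bit_eq c p q :
  lincident c p -> lincident c q -> (c.1 \in p.2) = (c.1 \in q.2) -> p = q.
Proof.
by do 2![case/orP => /eqP <-]; rewrite //= inE eqxx addbT; case: (c.1 \in c.2).
Qed.

Lemma lift_incident_inj c c' p :
  c.1 = c'.1 -> lincident c p -> lincident c' p -> c = c'.
Proof.
case: c c' => y X [_ X'] /= <-.
case/orP => /eqP <-; case/orP => /eqP [].
- by move=> ->.
- by move=> src_dst _; move: (no_loop y); rewrite src_dst eqxx.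
- by move=> dst_src _; move: (no_loop y); rewrite dst_src eqxx.
- by move=> /(inv_inj (flipK y)) ->.
Qed.

Lemma lift_regular k : regular src dst k -> regular lift_src lift_dst k.
Proof.
move=> reg [v X]; rewrite -(reg v).
have -> : star src dst v = fst @: lstar (v, X).
  apply/setP => y; rewrite inE; apply/idP/imsetP => [|[c + ->]]; last first.
    by rewrite inE => /lift_incident_proj.
  case/orP => /eqP y_v.
    by exists (y, X); rewrite // inE /incident /lift_src /= y_v eqxx.
  by exists (y, flip X y); rewrite // inE /incident /lift_dst /= flipK y_v eqxx orbT.
apply/esym/card_in_imset => c c'; rewrite !inE => lc lc' c_c'.
exact: lift_incident_inj c_c' lc lc'.
Qed.

Lemma leaf_of_lift_above (S : {set W * {set W}}) c v :
  c \in S -> incident src dst c.1 v ->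
  (forall c', c' \in S -> incident src dst c'.1 v -> c'.1 = c.1) ->
  exists2 p, p \in lleaves S & lincident c p.
Proof.
move=> Sc cv unique_v.
pose p := if src c.1 == v then lift_src c else lift_dst c.
have cp : lincident c p by rewrite /p /incident; case: ifP => _; rewrite eqxx ?orbT.
have p_v : p.1 = v.
  rewrite /p; case: ifP => [/eqP //|src_v] /=.
  by move: cv; rewrite /incident src_v => /eqP.
exists p => //; rewrite inE; apply/cards1P; exists c; apply/setP => c'.
rewrite !inE; apply/andP/eqP => [[Sc' c'p]|-> //].
apply: (@lift_incident_inj c' c p _ c'p cp); apply: unique_v => //.
by rewrite -p_v lift_incident_proj.
Qed.

(* Off c0 every edge of S keeps the c0.1-coordinate of the voltage, so S minus c0
   splits into the two sides of c0.  If p is not already a leaf, the side of p is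
   a smaller nonempty edge set; by induction it has a leaf other than p, and c0,
   whose only endpoint on that side is p, cannot spoil it. *)
Lemma leaf_of_lift_on_side (S : {set W * {set W}}) c0 p :
  (forall T : {set W * {set W}}, T \proper S -> 0 < #|T| -> 1 < #|lleaves T|) ->
  c0 \in S -> (forall c, c \in S -> c.1 = c0.1 -> c = c0) -> lincident c0 p ->
  exists2 x, x \in lleaves S & (c0.1 \in x.2) = (c0.1 \in p.2).
Proof.
move=> IH Sc0 unique_c0 c0p; set y0 := c0.1.
have [leaf_p | nonleaf_p] := boolP (p \in lleaves S); first by exists p.
have off_y0 c : c \in S -> c != c0 -> c.1 != y0.
  by move=> Sc; apply: contra => /eqP /(unique_c0 c Sc) ->.
pose T := [set c in S | (c != c0) && ((y0 \in c.2) == (y0 \in p.2))].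
have [c Tc cp] : exists2 c, c \in T & lincident c p.
  have : 1 < #|S :&: lstar p|.
    have : 0 < #|S :&: lstar p| by apply/card_gt0P; exists c0; rewrite !inE Sc0.
    by move: nonleaf_p; rewrite inE; case: #|_| => [|[]].
  case/(card_gt1_neq c0) => c; rewrite !inE => /andP[Sc cp] c_c0; exists c => //.
  by rewrite inE Sc c_c0 -(lift_incident_bit (off_y0 c Sc c_c0) cp) /=.
have TS : T \proper S.
  rewrite properE; apply/andP; split; first by apply/subsetP => z; rewrite inE => /andP[].
  by apply/subsetPn; exists c0; rewrite // inE eqxx andbF.
have T_gt0 : 0 < #|T| by apply/card_gt0P; exists c.
have [x leaf_x x_p] := card_gt1_neq p (IH T TS T_gt0).
have bit_x : (y0 \in x.2) = (y0 \in p.2).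
  move: leaf_x; rewrite inE => /cards1P[c1 T_x].
  have : c1 \in T :&: lstar x by rewrite T_x set11.
  rewrite !inE => /andP[/and3P[Sc1 c1_c0 /eqP <-]].
  exact: lift_incident_bit (off_y0 c1 Sc1 c1_c0).
exists x => //; rewrite (leaves_superset (proper_sub TS)) //.
apply/subsetP => z; rewrite !inE => /andP[Sz zx]; rewrite Sz /=.
have z_c0 : z != c0.
  apply: (contra_neq _ x_p) => def_z; rewrite def_z in zx.
  exact: lift_incident_bit_eq zx c0p bit_x.
by rewrite z_c0 -(lift_incident_bit (off_y0 z Sz z_c0) zx) bit_x /=.
Qed.

Lemma lift_two_leaves_single_lift (S : {set W * {set W}}) c0 :
  (forall T : {set W * {set W}}, T \proper S -> 0 < #|T| -> 1 < #|lleaves T|) ->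
  c0 \in S -> (forall c, c \in S -> c.1 = c0.1 -> c = c0) -> 1 < #|lleaves S|.
Proof.
move=> IH Sc0 unique_c0.
have src_c0 : lincident c0 (lift_src c0) by rewrite /incident eqxx.
have dst_c0 : lincident c0 (lift_dst c0) by rewrite /incident eqxx orbT.
have [x1 leaf1 bit1] := leaf_of_lift_on_side IH Sc0 unique_c0 src_c0.
have [x2 leaf2 bit2] := leaf_of_lift_on_side IH Sc0 unique_c0 dst_c0.
apply/card_gt1P; exists x1, x2; split => //; apply/eqP => x12.
by move: bit1; rewrite x12 bit2 /= inE eqxx addbT; case: (_ \in _).
Qed.

Lemma lift_two_leaves_multiple_lifts g (S : {set W * {set W}}) :
  has_leaf_upto src dst g -> 0 < #|S| <= 2 * g + 1 ->
  (forall y, y \in fst @: S -> 1 < #|[set c in S | c.1 == y]|) ->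
  1 < #|lleaves S|.
Proof.
move=> has_leaf /andP[S_gt0 S_g] fibre_gt1; set F := fst @: S.
have F_g : 0 < #|F| <= g.
  have := double_card_imset_le fibre_gt1; rewrite -/F => F_S.
  by rewrite card_gt0 imset_eq0 -card_gt0 S_gt0 /=; move: (leq_trans F_S S_g); lia.
have /set0Pn[v] := has_leaf F F_g; rewrite inE => /cards1P[y1 F_v].
have unique_v c : c \in S -> incident src dst c.1 v -> c.1 = y1.
  move=> Sc cv; apply/set1P; rewrite -F_v !inE cv andbT; exact: imset_f.
have : y1 \in F :&: star src dst v by rewrite F_v set11.
rewrite !inE => /andP[Fy1 y1_v].
have /card_gt1P[c1 [c2 []]] := fibre_gt1 y1 Fy1.
rewrite !inE => /andP[Sc1 /eqP c1_y1] /andP[Sc2 /eqP c2_y1] c1_c2.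
have c1_v : incident src dst c1.1 v by rewrite c1_y1.
have c2_v : incident src dst c2.1 v by rewrite c2_y1.
have [p1 leaf1 c1p1] := leaf_of_lift_above Sc1 c1_v
  (fun c Sc cv => etrans (unique_v c Sc cv) (esym c1_y1)).
have [p2 leaf2 c2p2] := leaf_of_lift_above Sc2 c2_v
  (fun c Sc cv => etrans (unique_v c Sc cv) (esym c2_y1)).
apply/card_gt1P; exists p1, p2; split => //; apply: contraNneq c1_c2 => p12.
rewrite p12 in c1p1; apply/eqP/(lift_incident_inj _ c1p1 c2p2).
by rewrite c1_y1 c2_y1.
Qed.

Lemma lift_has_two_leaves g :
  has_leaf_upto src dst g -> has_two_leaves_upto lift_src lift_dst (2 * g + 1).
Proof.
move=> has_leaf S; have [m] := ubnP #|S|; elim: m S => // m IHm S /ltnSE S_m S_g.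
have IH (T : {set W * {set W}}) : T \proper S -> 0 < #|T| -> 1 < #|lleaves T|.
  move=> TS T_gt0; have T_S := proper_card TS; case/andP: S_g => _ S_g.
  by apply: IHm; rewrite ?T_gt0 ?(leq_trans T_S) ?(leq_trans (ltnW T_S)).
have [|] := boolP [exists y in fst @: S, #|[set c in S | c.1 == y]| == 1].
  case/exists_inP => y0 _ /cards1P[c0 fibre_y0].
  have : c0 \in [set c in S | c.1 == y0] by rewrite fibre_y0 set11.
  rewrite inE => /andP[Sc0 /eqP c0_y0].
  apply: (lift_two_leaves_single_lift IH Sc0) => c Sc; rewrite c0_y0 => c_y0.
  by apply/set1P; rewrite -fibre_y0 inE Sc c_y0 eqxx.
rewrite negb_exists_in => /forall_inP fibre_ne1.
apply: lift_two_leaves_multiple_lifts has_leaf S_g _ => y Fy.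
have : 0 < #|[set c in S | c.1 == y]|.
  by case/imsetP: Fy => c Sc ->; apply/card_gt0P; exists c; rewrite inE Sc /=.
by move: (fibre_ne1 y Fy); case: #|_| => [|[]].
Qed.

End Lift.

Lemma exists_regular_graph k g : 0 < k ->
  exists (V W : finType) (src dst : W -> V),
    [/\ loopless src dst, regular src dst k, has_leaf_upto src dst g & 0 < #|W|].
Proof.
move=> k_gt0; elim: g => [|g [V [W [src [dst [no_loop reg has_leaf W_gt0]]]]]].
  exists bool, 'I_k, (fun=> false), (fun=> true); split => //.
  - move=> v; rewrite -[RHS]card_ord -cardsT; apply: eq_card => y.
    by rewrite !inE /incident; case: v.
  - by move=> S /andP[S_gt0 /(leq_trans S_gt0)].
  - by rewrite card_ord.
exists (V * {set W})%type, (W * {set W})%type, (lift_src src), (lift_dst dst).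
split; first exact: lift_loopless.
- exact: lift_regular.
- by apply: has_two_leaves_has_leaf (lift_has_two_leaves no_loop has_leaf); lia.
- by case/card_gt0P: W_gt0 => y _; apply/card_gt0P; exists (y, set0).
Qed.

(** * Bounds on the semi-saturation number *)

Lemma big_minn_le (I : eqType) (r : seq I) (P : pred I) (F : I -> nat) x0 i :
  i \in r -> P i -> \big[minn/x0]_(j <- r | P j) F j <= F i.
Proof.
elim: r => [//|j r IHr]; rewrite inE big_cons => /predU1P[<- -> | ri Pi].
  exact: geq_minl.
by case: (P j); rewrite ?(leq_trans (geq_minr _ _)) ?IHr.
Qed.

Lemma complete_kgraph_semisat k n :
  kuniform k (complete_kgraph k n) /\ Bk_semisat k (complete_kgraph k n).
Proof.
split; first by apply/forall_inP => f; rewrite inE.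
by apply/forallP => e; apply/implyP => /andP[card_e]; rewrite inE card_e.
Qed.

Lemma wsat_Bk_attained k n :
  exists E : {set {set 'I_n}}, [/\ kuniform k E, Bk_semisat k E & #|E| = wsat_Bk k n].
Proof.
rewrite /wsat_Bk; apply: (big_ind (fun w => exists E : {set {set 'I_n}},
  [/\ kuniform k E, Bk_semisat k E & #|E| = w])).
- by have [unif sat] := complete_kgraph_semisat k n; exists (complete_kgraph k n).
- move=> x y [E [unifE satE <-]] [E' [unifE' satE' <-]].
  by rewrite /minn; case: ifP => _; [exists E | exists E'].
- by move=> E /andP[unif sat]; exists E.
Qed.

Lemma wsat_Bk_le k n (E : {set {set 'I_n}}) :
  kuniform k E -> Bk_semisat k E -> wsat_Bk k n <= #|E|.
Proof. by move=> unifE satE; apply: big_minn_le; rewrite ?mem_index_enum ?unifE. Qed.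

Lemma wsat_Bk_le_hits_once (T : finType) k (F : {set {set T}}) :
  0 < k -> uniform k F -> hits_once_upto k F -> wsat_Bk k #|T| <= #|F|.
Proof.
move=> k_gt0 unifF hitsF.
apply: leq_trans (wsat_Bk_le (E := himage enum_rank F) _ _) (leq_imset_card _ _).
  by apply/forall_inP => f /(uniform_himage enum_rank_inj unifF) ->.
apply/forallP => e; apply/implyP => /andP[/eqP card_e _].
have card_pre : #|enum_rank @^-1: e| = #|e|.
  exact/on_card_preimset/onW_bij/enum_rank_bij.
apply: (hit_once_embed enum_rank_inj hitsF) => //; last by rewrite card_e.
by rewrite card_pre card_e.
Qed.

Lemma semisat_card_lt k n (E : {set {set 'I_n}}) :
  0 < k -> kuniform k E -> Bk_semisat k E -> n < k * #|E|.+1.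
Proof.
move=> k_gt0 /forall_inP unifE /forallP satE.
have cover_le : #|cover E| <= k * #|E|.
  rewrite (leq_trans (leq_card_cover E)) // (eq_bigr (fun=> k)).
    by rewrite sum_nat_const mulnC.
  by move=> f /unifE /eqP.
suff : #|~: cover E| < k by move: (cardsC (cover E)); rewrite card_ord; lia.
rewrite ltnNge; apply/negP => /exists_subset_card[e /subsetP e_uncovered card_e].
have e_disjoint f x : f \in E -> x \in e -> x \notin f.
  by move=> Ef /e_uncovered; rewrite inE; apply: contra => fx; apply/bigcupP; exists f.
have [x ex] : exists x, x \in e by apply/card_gt0P; rewrite card_e.
have eNE : e \notin E by apply/negP => Ee; move: (e_disjoint e x Ee ex); rewrite ex.
move: (satE e); rewrite card_e eqxx eNE => /exists_inP[f Ef /cards1P[y efy]].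
have : y \in e :&: f by rewrite efy set11.
by rewrite inE => /andP[ey]; apply/negP/e_disjoint.
Qed.

Lemma wsat_Bk_lower k n : 0 < k -> n < k * (wsat_Bk k n).+1.
Proof.
move=> k_gt0; have [E [unifE satE <-]] := wsat_Bk_attained k n.
exact: semisat_card_lt.
Qed.

Lemma wsat_Bk_upper k : 0 < k ->
  exists C N, forall n, N <= n -> k * wsat_Bk k n <= 2 * n + C.
Proof.
move=> k_gt0.
have [V [W [src [dst [no_loop reg has_leaf W_gt0]]]]] := exists_regular_graph k k_gt0.
have deg_sum := handshake no_loop reg; set L := #|W| in W_gt0 deg_sum.
exists (k * 'C(2 * k + L, k)), (2 * k) => n n_ge.
pose q := (n - 2 * k) %/ L; pose m := 2 * k + (n - 2 * k) %% L.
have n_qm : n = q * L + m by rewrite /m /q; move: (divn_eq (n - 2 * k) L); lia.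
have m_lt : m <= 2 * k + L by rewrite /m leq_add2l ltnW // ltn_mod.
pose H := hsum (copies q (stars src dst)) (complete_kgraph k m).
have card_vertices : #|{: 'I_q * W + 'I_m}| = n.
  by rewrite card_sum card_prod !card_ord n_qm.
have : wsat_Bk k n <= #|H|.
  rewrite -card_vertices; apply: wsat_Bk_le_hits_once => //.
    apply: uniform_hsum (uniform_copies (uniform_stars reg)) _.
    exact: uniform_complete_kgraph.
  apply: hits_once_hsum (hits_once_copies (hits_once_stars has_leaf)) _.
  by apply: hits_once_complete; lia.
have : #|H| <= q * #|V| + 'C(2 * k + L, k).
  apply: leq_trans (card_hsum _ _) (leq_add _ _).
    by rewrite (leq_trans (card_copies _ _)) // leq_mul2l leq_imset_card orbT.
  by rewrite card_draws card_ord leq_bin2l.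
have : k * (q * #|V|) = 2 * (q * L) by rewrite mulnCA deg_sum mulnCA.
nia.
Qed.

Local Open Scope ring_scope.

Theorem proposition2p1 (k : nat) (hk : (4 <= k)%N) :
  exists (C1 C2 : rat), 0 <= C2 /\
    exists N : nat, forall n : nat, (N <= n)%N ->
      (2 * n%:R) / (k%:R + C2) <= (wsat_Bk k n)%:R /\
      (wsat_Bk k n)%:R <= (2 * n%:R) / k%:R + C1.
Proof.
have k_gt0 : (0 < k)%N by lia.
have [C [N upper]] := wsat_Bk_upper k_gt0.
exists (C%:R / k%:R), (2 * k)%:R; split; first by rewrite ler0n.
exists (maxn N (3 * k)) => n; rewrite geq_max => /andP[n_N n_3k]; split.
- have lower := wsat_Bk_lower n k_gt0.
  rewrite ler_pdivrMr; last by rewrite -natrD ltr0n; lia.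
  by rewrite -natrD -(natrM _ 2) -natrM ler_nat; nia.
- have := upper n n_N.
  rewrite -mulrDl ler_pdivlMr ?ltr0n // -(natrM _ 2) -natrD -natrM ler_nat.
  by rewrite mulnC.
Qed.
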